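(* A topological space $X$ is $K^\theta$-compact if and only if it is w-compact.
   Context: $\mathsf{Top}$ is the category of topological spaces and continuous maps; $\mathsf{Tych}$ its full subcategory of Tychonoff spaces. For a space $X$, let $\mathbb I=[0,1]$, $\Phi_X:X\to\mathbb I^{C(X,\mathbb I)}$, $x\mapsto(f(x))_f$, and $\tau X=\Phi_X(X)$ (subspace topology); $\theta_X:X\to\tau X$ is the induced surjection, which is the reflection of $X$ into $\mathsf{Tych}$ (Tychonoff functor). Subobjects of a space are its subsets with the subspace topology. The closure operator $K^\theta$ on $\mathsf{Top}$ is defined by $K^\theta_X(S)=\theta_X^{-1}\big(\overline{\theta_X(S)}\big)$ for $S\subseteq X$, where the bar denotes topological closure in $\tau X$. A space $X$ is $K^\theta$-compact if for every space $Y$ and every subset $S\subseteq X\times Y$, $\pi_Y(K^\theta_{X\times Y}(S))=K^\theta_Y(\pi_Y(S))$, where $\pi_Y:X\times Y\to Y$ is the projection. A cozero-set of $X$ is a set $\{x: g(x)>0\}$ for some continuous $g:X\to\mathbb I$; a zero-set is $\{x: f(x)=0\}$ for continuous $f:X\to\mathbb I$. A subset is $\tau$-open if it is a union of cozero-sets. $X$ is w-compact (Ishii) if for every family $\{P_\lambda\}$ of $\tau$-open subsets of $X$ with the finite intersection property, $\bigcap_\lambda\overline{P_\lambda}\ne\emptyset$ (closures in $X$). *)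

From HB Require Import structures.
From mathcomp Require Import all_boot all_order all_algebra.
From mathcomp Require Import all_classical all_reals all_analysis.
Set Implicit Arguments. Unset Strict Implicit. Unset Printing Implicit Defensive.
Import Order.TTheory GRing.Theory Num.Theory.
Import numFieldTopology.Exports.
Local Open Scope classical_set_scope.
Local Open Scope ring_scope.

Section Tych.
Variable R : realType.

Definition unitI : topologicalType := set_type [set x : R | 0 <= x <= 1].

Definition CXI (X : topologicalType) : Type := {f : X -> unitI | continuous f}.

Definition cube (X : topologicalType) : topologicalType :=
  prod_topology (fun _ : CXI X => unitI).

Definition PhiX (X : topologicalType) (x : X) : cube X :=
  fun f => proj1_sig f x.

Definition tauX (X : topologicalType) : topologicalType := set_type (range (@PhiX X)).

Definition thetaX (X : topologicalType) (x : X) : tauX X :=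
  SigSub (mem_set (imageT (@PhiX X) x)).

Definition Ktheta (X : topologicalType) (S : set X) : set X :=
  (@thetaX X) @^-1` closure ((@thetaX X) @` S).

Definition Ktheta_compact (X : topologicalType) : Prop :=
  forall (Y : topologicalType) (S : set (X * Y)%type),
    (@snd X Y) @` (Ktheta S) = Ktheta ((@snd X Y) @` S).

Definition cozero (X : topologicalType) (C : set X) : Prop :=
  exists g : X -> R, continuous g /\ (forall x, 0 <= g x <= 1) /\
    C = [set x | 0 < g x].

Definition tau_open (X : topologicalType) (P : set X) : Prop :=
  exists F : set (set X), (forall C, F C -> cozero C) /\ P = \bigcup_(C in F) C.

Definition fip (X : Type) (L : Type) (P : L -> set X) : Prop :=
  forall D : set L, finite_set D -> \bigcap_(l in D) P l !=set0.

Definition w_compact (X : topologicalType) : Prop :=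
  forall (L : Type) (P : L -> set X),
    (forall l, tau_open (P l)) -> fip P ->
    \bigcap_(l in setT) closure (P l) !=set0.

End Tych.

From HB Require Import structures.
From mathcomp Require Import all_boot all_order all_algebra.
From mathcomp Require Import all_classical all_reals all_analysis.
From mathcomp Require Import lra.

(* A point [x] lies in [Ktheta S] exactly when every continuous real function
   positive at [x] is positive somewhere on [S].

   If [X] is w-compact, every continuous [h] on [X * Y] is equicontinuous in
   the second variable, uniformly in the first, so [y |-> sup_x |h(x,y) -
   h(x,y0)|] is continuous.  Given [y0] in the [Ktheta]-closure of the
   projection of [S], the tau-open sets of those [x] for which some point of
   [S] is [h]-close to [(x, y0)] then have the finite intersection property,
   and any cluster point [x] of them puts [(x, y0)] in [Ktheta S].

   Conversely, let [P] be a family of tau-open sets with the finite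
   intersection property and no cluster point.  For every finite set [D] of
   indices pick a peak function, equal to [1] at some point and supported in
   the intersection of the [P l], [l \in D].  Placing them over the space of
   finite index sets with a limit point at infinity yields a continuous
   function on the product, because near every point of [X] almost all of
   them vanish; its peaks form a set whose projection accumulates at the limit
   point, while no point above the limit point is in its [Ktheta]-closure. *)

Set Implicit Arguments. Unset Strict Implicit. Unset Printing Implicit Defensive.
Import Order.TTheory GRing.Theory Num.Theory.
Import numFieldTopology.Exports.
Local Open Scope classical_set_scope.
Local Open Scope ring_scope.

Lemma finite_set_ind (L : Type) (P : set L -> Prop) : P set0 ->
  (forall A l, finite_set A -> P A -> P (l |` A)) ->
  forall A, finite_set A -> P A.
Proof.
move=> P0 PU A /(@finite_seqP {classic L}) [s ->].
elim: s => [|l s IHs]; first by rewrite set_nil.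
have -> : [set` (l :: s)] = l |` [set` s].
  apply/seteqP; split => y /=; rewrite inE.
    by case/orP => [/eqP->|]; [left|right].
  by case=> [->|->]; rewrite ?eqxx ?orbT.
by apply: PU => //; apply/(@finite_seqP {classic L}); exists s.
Qed.

Lemma filter_bigcap_finite (T L : Type) (F : set_system T) {FF : Filter F}
    (D : set L) (f : L -> set T) :
  finite_set D -> (forall l, D l -> F (f l)) -> F (\bigcap_(l in D) f l).
Proof.
move: D; apply: finite_set_ind => [_|A l _ IH Ff].
  by rewrite bigcap_set0; exact: filterT.
rewrite bigcap_setU1; apply: filterI; first by apply: Ff; left.
by apply: IH => k Ak; apply: Ff; right.
Qed.

Lemma initial_cvg (S : choiceType) (T : topologicalType) (w : S -> T)
    (F : set_system S) (s : S) :
  Filter F -> w @ F --> w s -> F --> (s : initial_topology w).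
Proof.
move=> FF ws A /= [B [[C oC <-] Bs BA]].
by apply: (filterS BA); apply: ws; exact: open_nbhs_nbhs.
Qed.

Lemma prod_topology_cvg (I : Type) (K : I -> topologicalType)
    (F : set_system (prod_topology K)) (p : prod_topology K) :
  Filter F -> (forall i, (fun q => q i) @ F --> p i) -> F --> p.
Proof.
move=> FF Fp; apply/(@cvg_sup (forall i, K i) I (fun i => Topological.class
    (initial_topology (fun q : forall i, K i => q i))) F p FF) => i.
exact: (@initial_cvg _ _ (fun q : forall i, K i => q i) F p FF (Fp i)).
Qed.

Lemma continuous_sectionl (X Y Z : topologicalType) (h : X * Y -> Z) (y : Y) :
  continuous h -> continuous (fun x => h (x, y)).
Proof.
move=> ch x; apply: (@continuous_comp _ _ _ (fun x => (x, y)) h x _ (ch (x, y))).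
by apply: cvg_pair; [exact: cvg_id | exact: cvg_cst].
Qed.

Section TychonoffClosure.
Variable R : realType.

Definition clamp01 (t : R) : R := Num.max 0 (Num.min 1 t).

Lemma clamp01_ge0_le1 t : 0 <= clamp01 t <= 1.
Proof. by rewrite /clamp01 le_max lexx ge_max ler01 ge_min lexx. Qed.

Lemma clamp01_gt0 t : (0 < clamp01 t) = (0 < t).
Proof. by rewrite /clamp01 lt_max ltxx lt_min ltr01. Qed.

Lemma continuous_clamp01 (T : topologicalType) (g : T -> R) :
  continuous g -> continuous (fun t => clamp01 (g t)).
Proof.
move=> cg x; apply: (@continuous_max R T (fun=> 0) (fun t => Num.min 1 (g t))).
  exact: cvg_cst.
by apply: (@continuous_min R T (fun=> 1) g); [exact: cvg_cst | exact: cg].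
Qed.

Lemma continuous_minr (T : topologicalType) (f g : T -> R) :
  continuous f -> continuous g -> continuous (fun t => Num.min (f t) (g t)).
Proof. by move=> cf cg t; exact: (@continuous_min R T f g t (cf t) (cg t)). Qed.

Lemma continuous_sub_dist (T : topologicalType) (f : T -> R) (r c : R) :
  continuous f -> continuous (fun t => r - `|f t - c|).
Proof.
move=> cf t; apply: cvgB; first exact: cvg_cst.
by apply: cvg_norm; apply: cvgB; [exact: cf | exact: cvg_cst].
Qed.

Lemma cozero_gt0 (X : topologicalType) (g : X -> R) :
  continuous g -> cozero R [set x | 0 < g x].
Proof.
move=> cg; exists (fun t => clamp01 (g t)).
split; first exact: continuous_clamp01.
split; first exact: (fun=> clamp01_ge0_le1 _).
by apply/seteqP; split => t /=; rewrite clamp01_gt0.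
Qed.

Lemma tau_open_exists_gt0 (X : topologicalType) (J : Type) (Q : J -> Prop)
    (g : J -> X -> R) :
  (forall j, continuous (g j)) ->
  tau_open R [set x | exists2 j, Q j & 0 < g j x].
Proof.
move=> cg; exists [set [set x | 0 < g j x] | j in Q]; split.
  by move=> _ [j _ <-]; exact: cozero_gt0.
apply/seteqP; split => x /=; last by move=> [_ [j Qj <-] gx]; exists j.
by move=> [j Qj gx]; exists [set x | 0 < g j x] => //; exists j.
Qed.

Lemma finite_bigcap_gt0 (T : topologicalType) (L : Type) (D : set L)
    (g : L -> T -> R) (t0 : T) :
  finite_set D -> (forall l, D l -> continuous (g l) /\ 0 < g l t0) ->
  exists G : T -> R, [/\ continuous G, 0 < G t0 &
    forall t, 0 < G t -> forall l, D l -> 0 < g l t].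
Proof.
move: D; apply: finite_set_ind => [_|A l _ IH gD].
  by exists (fun=> 1); split => // t; exact: cvg_cst.
have [G [cG G0 GD]] : exists G : T -> R, [/\ continuous G, 0 < G t0 &
    forall t, 0 < G t -> forall k, A k -> 0 < g k t].
  by apply: IH => k Ak; apply: gD; right.
have [cgl gl0] := gD l (or_introl erefl).
exists (fun t => Num.min (G t) (g l t)); split.
- exact: continuous_minr.
- by rewrite lt_min G0.
- by move=> t; rewrite lt_min => /andP[Gt glt] k [->//|Ak]; exact: GD.
Qed.

Lemma continuous_tauX_eval (X : topologicalType) (f : CXI R X) :
  continuous (fun p : tauX R X => sval (sval p f)).
Proof.
move=> p.
have val_cont : {for p, continuous (fun p : tauX R X => sval p : cube R X)}.
  exact: initial_continuous.
have proj_cont := @proj_continuous {classic CXI R X} (fun=> unitI R) f (sval p).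
have sval_cont : {for sval p f, continuous (fun u : unitI R => sval u)}.
  exact: initial_continuous.
exact: continuous_comp (continuous_comp val_cont proj_cont) sval_cont.
Qed.

Lemma Ktheta_test (X : topologicalType) (S : set X) (x : X) (g : X -> R) :
  Ktheta R S x -> continuous g -> 0 < g x -> exists2 s, S s & 0 < g s.
Proof.
move=> Kx cg gx.
pose gI t : unitI R := exist _ (clamp01 (g t)) (mem_set (clamp01_ge0_le1 (g t))).
have cgI : continuous gI.
  by apply: (@continuous_comp_initial _ _ _ set_val); exact: continuous_clamp01.
pose f : CXI R X := exist _ gI cgI.
have fx0 : 0 < sval (sval (thetaX R x) f) by rewrite /= clamp01_gt0.
have : nbhs (thetaX R x) [set p : tauX R X | 0 < sval (sval p f)].
  move/cvgrPdist_lt: (@continuous_tauX_eval X f (thetaX R x)) => /(_ _ fx0).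
  apply: filterS => p /= /(le_lt_trans (ler_norm _)).
  by rewrite ltrBlDl -ltrBlDr subrr.
case/Kx => _ [[s Ss <-] /=]; rewrite clamp01_gt0 => gs.
by exists s.
Qed.

Lemma thetaX_cvg (X : topologicalType) (F : set_system X) (x : X) : Filter F ->
  (forall g : X -> R, continuous g -> g @ F --> g x) ->
  @thetaX R X @ F --> thetaX R x.
Proof.
move=> FF Fx; apply: (@initial_cvg _ _ set_val _ (thetaX R x) (fmap_filter _ _)).
apply: prod_topology_cvg => f.
apply: (@initial_cvg _ _ set_val _ _ (fmap_filter _ _)).
pose fR t : R := sval (sval f t).
have cfR : continuous fR.
  by move=> t; apply: (continuous_comp (svalP f t)); exact: initial_continuous.
exact: (Fx fR cfR).
Qed.

Lemma Ktheta_from_tests (X : topologicalType) (S : set X) (x : X) :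
  (forall g : X -> R, continuous g -> 0 < g x -> exists2 s, S s & 0 < g s) ->
  Ktheta R S x.
Proof.
move=> tests.
pose T := filter_from [set g : X -> R | continuous g /\ 0 < g x]
  (fun g => S `&` [set t | 0 < g t]).
have FT : Filter T.
  apply: filter_from_filter.
    by exists (fun=> 1); split => // t; exact: cvg_cst.
  move=> g1 g2 [cg1 g1x] [cg2 g2x]; exists (fun t => Num.min (g1 t) (g2 t)).
    by split; [exact: continuous_minr | rewrite lt_min g1x g2x].
  by move=> t [St]; rewrite /= lt_min => /andP[? ?].
have PT : ProperFilter T.
  apply: filter_from_proper => g [cg gx].
  by have [s Ss gs] := tests g cg gx; exists s.
rewrite /Ktheta /= closureEcvg; exists (@thetaX R X @ T).
  exact: fmap_proper_filter.
split; last first.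
  move=> A SA; exists (fun=> 1); first by split => // z; exact: cvg_cst.
  by move=> z [Sz _]; apply: SA; exists z.
apply: thetaX_cvg => g cg; apply/cvgrPdist_lt => e e0.
exists (fun t => e - `|g t - g x|); first split.
- exact: continuous_sub_dist.
- by rewrite subrr normr0 subr0.
by move=> t [_]; rewrite /= subr_gt0 distrC.
Qed.

Lemma KthetaP (X : topologicalType) (S : set X) (x : X) :
  Ktheta R S x <->
  forall g : X -> R, continuous g -> 0 < g x -> exists2 s, S s & 0 < g s.
Proof. by split => [Kx g|]; [exact: Ktheta_test | exact: Ktheta_from_tests]. Qed.

End TychonoffClosure.

Section WCompactToKtheta.
Variable R : realType.

Lemma Ktheta_image_sub (X Y : topologicalType) (f : X -> Y) (S : set X) :
  continuous f -> f @` Ktheta R S `<=` Ktheta R (f @` S).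
Proof.
move=> cf _ [x Kx <-]; apply/KthetaP => g cg gfx.
have cgf : continuous (g \o f).
  by move=> t; exact: continuous_comp (cf t) (cg (f t)).
by have [s Ss gs] := Ktheta_test Kx cgf gfx; exists (f s) => //; exists s.
Qed.

Lemma w_compact_equicontinuous (X Y : topologicalType) (h : X * Y -> R)
    (y1 : Y) (e : R) :
  w_compact R X -> continuous h -> 0 < e ->
  exists2 B, nbhs y1 B & forall y, B y -> forall x, `|h (x, y) - h (x, y1)| < e.
Proof.
move=> wX ch e0; apply: contrapT => nequi.
pose N := {B : set Y | nbhs y1 B}.
have bad (B : N) : exists z : X * Y, sval B z.2 /\ e <= `|h z - h (z.1, y1)|.
  case: B => B nB; apply: contrapT => nz; apply: nequi.
  exists B => // y By x; rewrite ltNge; apply/negP => exy.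
  by apply: nz; exists (x, y).
have [c cP] := choice bad.
pose e4 := e / 4; have e40 : 0 < e4 by rewrite divr_gt0.
pose g (B : N) x := Num.min (e4 - `|h (x, (c B).2) - h (c B)|)
                            (e4 - `|h (x, y1) - h ((c B).1, y1)|).
pose P (B : N) := [set x | exists2 B', sval B' `<=` sval B & 0 < g B' x].
have tauP B : tau_open R (P B).
  apply: tau_open_exists_gt0 => B' x.
  by apply: continuous_minr; apply: continuous_sub_dist => //;
    exact: continuous_sectionl.
have fipP : fip P.
  move=> D fD; have nD : nbhs y1 (\bigcap_(B in D) sval B).
    by apply: filter_bigcap_finite => // B _; exact: svalP.
  exists (c (exist _ _ nD)).1 => B DB; exists (exist _ _ nD).
    exact: bigcap_inf.
  by rewrite /g lt_min; case: (c _) => a b /=; rewrite !subrr normr0 subr0 e40.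
have [x clx] := wX _ _ tauP fipP.
move/cvgrPdist_lt: (ch (x, y1)) => /(_ e4 e40) [[A B] /= [nA nB] AB].
have [x' [[B' sB' gB'] Ax']] := clx (exist _ B nB) I A nA.
have [cBy] := cP B'.
have := AB (x', (c B').2) (conj Ax' (sB' _ cBy)).
have := AB (x', y1) (conj Ax' (nbhs_singleton nB)).
move: gB'; rewrite /g lt_min !subr_gt0 => /andP[].
case: (c B') => a b /=; rewrite !ltr_norml ler_normr /e4.
by move=> /andP[? ?] /andP[? ?] /andP[? ?] /andP[? ?] /orP[] ?; lra.
Qed.

Definition slice_dist (X Y : Type) (h : X * Y -> R) (y0 y : Y) : R :=
  sup [set `|h (x, y) - h (x, y0)| | x in [set: X]].

Lemma slice_dist_ub (X Y : Type) (h : X * Y -> R) (y0 y : Y) (x : X) :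
  (forall z, 0 <= h z <= 1) -> `|h (x, y) - h (x, y0)| <= slice_dist h y0 y.
Proof.
move=> h01; apply: ub_le_sup; last by exists x.
exists 1 => _ [x' _ <-].
have /andP[? ?] := h01 (x', y); have /andP[? ?] := h01 (x', y0).
by rewrite ler_norml; apply/andP; split; lra.
Qed.

Lemma slice_dist_le (X Y : Type) (h : X * Y -> R) (y0 y : Y) (x0 : X) (r : R) :
  (forall x, `|h (x, y) - h (x, y0)| <= r) -> slice_dist h y0 y <= r.
Proof.
move=> hr; apply: ge_sup; first by exists `|h (x0, y) - h (x0, y0)|, x0.
by move=> _ [x _ <-].
Qed.

Lemma continuous_slice_dist (X Y : topologicalType) (h : X * Y -> R) (y0 : Y)
    (x0 : X) :
  w_compact R X -> continuous h -> (forall z, 0 <= h z <= 1) ->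
  continuous (slice_dist h y0).
Proof.
move=> wX ch h01 y1; apply/cvgrPdist_lt => e e0.
have e20 : 0 < e / 2 by rewrite divr_gt0.
have [B nB hB] := w_compact_equicontinuous y1 wX ch e20.
apply: filterS nB => y By.
have le_slice y2 y3 : (forall x, `|h (x, y2) - h (x, y3)| < e / 2) ->
    slice_dist h y0 y2 <= slice_dist h y0 y3 + e / 2.
  move=> close; apply: (slice_dist_le x0) => x.
  have := close x; have := slice_dist_ub y0 y3 x h01.
  rewrite ltr_norml !ler_norml => /andP[? ?] /andP[? ?].
  by apply/andP; split; lra.
have := le_slice _ _ (hB y By).
have := le_slice y1 y (fun x => ltac:(by rewrite distrC; exact: hB)).
by rewrite ltr_norml => ? ?; apply/andP; split; lra.
Qed.

Section WCompactProjection.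
Variables (X Y : topologicalType) (S : set (X * Y)) (y0 : Y).

Record test_pair := TestPair {
  tp_fun : X * Y -> R;
  tp_rad : R;
  tp_cont : continuous tp_fun;
  tp_ge0_le1 : forall z, 0 <= tp_fun z <= 1;
  tp_rad_gt0 : 0 < tp_rad }.

Definition near_S (i : test_pair) : set X :=
  [set x | exists2 s, S s /\ slice_dist (tp_fun i) y0 s.2 < tp_rad i &
     0 < tp_rad i - `|tp_fun i (x, s.2) - tp_fun i s|].

Lemma near_S_tau_open i : tau_open R (near_S i).
Proof.
apply: tau_open_exists_gt0 => s; apply: continuous_sub_dist.
by apply: continuous_sectionl; exact: tp_cont.
Qed.

Lemma near_S_fip : w_compact R X -> Ktheta R (snd @` S) y0 -> fip near_S.
Proof.
move=> wX Ky0 D fD.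
have c1 : continuous (fun _ : Y => 1 : R) by move=> ?; exact: cvg_cst.
(* [slice_dist_le] needs a point of [X]; there is one since [S] is nonempty. *)
have [_ [[x0 _] _ _] _] := Ktheta_test Ky0 c1 ltr01.
pose g i y := tp_rad i - slice_dist (tp_fun i) y0 y.
have gD i : D i -> continuous (g i) /\ 0 < g i y0.
  move=> _; split.
    have cs := @continuous_slice_dist X Y _ y0 x0 wX (@tp_cont i) (@tp_ge0_le1 i).
    by move=> y; apply: cvgB; [exact: cvg_cst | exact: cs].
  rewrite subr_gt0; apply: le_lt_trans (@tp_rad_gt0 i).
  by apply: (slice_dist_le x0) => x; rewrite subrr normr0.
have [G [cG G0 GD]] := finite_bigcap_gt0 fD gD.
have [_ [s Ss <-] Gs] := Ktheta_test Ky0 cG G0.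
exists s.1 => i Di; exists s.
  by split => //; have := GD _ Gs i Di; rewrite subr_gt0.
by case: s {Ss Gs} => a b; rewrite subrr normr0 subr0 tp_rad_gt0.
Qed.

Lemma Ktheta_near_S_cluster (x : X) :
  (forall i, closure (near_S i) x) -> Ktheta R S (x, y0).
Proof.
move=> clx; apply/KthetaP => k ck kx.
pose c := clamp01 (k (x, y0)).
have c4 : 0 < c / 4 by rewrite divr_gt0 ?clamp01_gt0.
pose i := TestPair (continuous_clamp01 ck) (fun z => clamp01_ge0_le1 (k z)) c4.
have /cvgrPdist_lt /(_ _ c4) nx := @continuous_sectionl X Y R _ y0 (@tp_cont i) x.
have [x' [[s [Ss ds] ks] /= kx']] := clx i _ nx.
exists s => //; rewrite -clamp01_gt0.
have := le_lt_trans (slice_dist_ub y0 s.2 x' (@tp_ge0_le1 i)) ds.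
move: ks kx'; rewrite /= subr_gt0 !ltr_norml /c.
by move=> /andP[? ?] /andP[? ?] /andP[? ?]; lra.
Qed.

End WCompactProjection.

Lemma w_compact_Ktheta_compact (X : topologicalType) :
  w_compact R X -> Ktheta_compact R X.
Proof.
move=> wX Y S; apply/seteqP; split.
  by apply: Ktheta_image_sub => z; exact: cvg_snd.
move=> y0 Ky0.
have [x clx] := wX _ _ (near_S_tau_open S y0) (near_S_fip wX Ky0).
by exists (x, y0) => //; apply: Ktheta_near_S_cluster => i; exact: clx.
Qed.

End WCompactToKtheta.

(* The finite subsets of [L], directed by inclusion, with a limit point
   [None]: the neighbourhoods of [None] contain every finite superset of some
   finite [D0], while every [Some D] is isolated. *)
Definition finset_net (L : Type) := option (set L).
HB.instance Definition _ (L : Type) := Choice.on (finset_net L).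

Section FinsetNet.
Variable L : Type.

Definition finset_net_open : set_system (finset_net L) :=
  [set O | O None -> exists2 D0, finite_set D0 &
     forall D, finite_set D -> D0 `<=` D -> O (Some D)].

Lemma finset_net_openT : finset_net_open setT.
Proof. by move=> _; exists set0 => //; exact: finite_set0. Qed.

Lemma finset_net_openI : setI_closed finset_net_open.
Proof.
move=> A B oA oB [/oA [D1 fD1 D1A] /oB [D2 fD2 D2B]].
exists (D1 `|` D2); first by rewrite finite_setU.
move=> D fD sD; split.
  by apply: D1A => // l ?; apply: sD; left.
by apply: D2B => // l ?; apply: sD; right.
Qed.

Lemma finset_net_open_bigU (I : Type) (f : I -> set (finset_net L)) :
  (forall i, finset_net_open (f i)) -> finset_net_open (\bigcup_i f i).
Proof.
move=> openf [i _ fi]; have [D0 fD0 D0f] := openf i fi.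
by exists D0 => // D fD sD; exists i => //; apply: D0f.
Qed.

HB.instance Definition _ := isOpenTopological.Build (finset_net L)
  finset_net_openT finset_net_openI finset_net_open_bigU.

End FinsetNet.

Section KthetaToW.
Variable R : realType.

Lemma tau_open_cozero_nbhs (X : topologicalType) (P : set X) (x : X) :
  tau_open R P -> P x ->
  exists g : X -> R, [/\ continuous g, 0 < g x & forall t, 0 < g t -> P t].
Proof.
move=> [F [cozF ->]] [C FC Cx]; have [g [cg [_ Cg]]] := cozF C FC.
exists g; split => //; first by move: Cx; rewrite Cg.
by move=> t gt; exists C => //; rewrite Cg.
Qed.

Lemma tau_open_peak (X : topologicalType) (L : Type) (P : L -> set X)
    (D : set L) (x : X) :
  (forall l, tau_open R (P l)) -> finite_set D -> (forall l, D l -> P l x) ->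
  exists g : X -> R, [/\ continuous g, forall t, 0 <= g t, g x = 1 &
    forall t, 0 < g t -> forall l, D l -> P l t].
Proof.
move=> tauP fD Dx.
have cz l : exists g : X -> R, D l ->
    [/\ continuous g, 0 < g x & forall t, 0 < g t -> P l t].
  case: (pselect (D l)) => [Dl|nDl]; last by exists (fun=> 0).
  by have [g gP] := tau_open_cozero_nbhs (tauP l) (Dx l Dl); exists g.
have [g gP] := choice cz.
have gD l : D l -> continuous (g l) /\ 0 < g l x by case/gP => cg gx _; split.
have [G [cG Gx GD]] := finite_bigcap_gt0 fD gD.
exists (fun t => clamp01 (G t / G x)); split.
- by apply: continuous_clamp01 => t; apply: cvgM; [exact: cG | exact: cvg_cst].
- by move=> t; have /andP[] := clamp01_ge0_le1 (G t / G x).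
- by rewrite divff ?gt_eqF // /clamp01 minxx; apply/max_idPr; exact: ler01.
- move=> t; rewrite clamp01_gt0 pmulr_lgt0 ?invr_gt0 // => Gt l Dl.
  by have [_ _] := gP l Dl; apply; exact: GD.
Qed.

Lemma finset_net_None_test (L : Type) (g : finset_net L -> R) :
  continuous g -> 0 < g None -> exists2 D, finite_set D & 0 < g (Some D).
Proof.
move=> cg gN; move/cvgrPdist_lt: (cg None) => /(_ _ gN) [B [oB BN] Bg].
have [D fD DB] := oB BN; exists D => //.
by have := Bg _ (DB D fD (fun _ => id)); rewrite ltr_norml => /andP[_]; lra.
Qed.

Lemma continuous_finset_net_glue (X : topologicalType) (L : Type)
    (F : set L -> X -> R) :
  (forall D, continuous (F D)) ->
  (forall u : X, exists l, exists2 A, nbhs u A &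
     forall D t, D l -> A t -> F D t = 0) ->
  continuous (fun z : X * finset_net L => if z.2 is Some D then F D z.1 else 0).
Proof.
move=> cF vanish [u [D|]]; apply/cvgrPdist_lt => e e0.
  move/cvgrPdist_lt: (cF D u) => /(_ e e0) nu.
  exists ([set u' | `|F D u - F D u'| < e], [set Some D]).
    by split => //; exists [set Some D]; split => // -[].
  by case=> ? ? /= [? ->].
have [l [A nA AF]] := vanish u.
pose N := [set y : finset_net L | if y is Some D then D l else True].
exists (A, N); first split => //.
  exists N; split => // _; exists [set l]; first exact: finite_set1.
  by move=> D _; apply.
by case=> u' [D|] /= [Au' ND]; rewrite ?AF // subrr normr0.
Qed.

Lemma Ktheta_compact_w_compact (X : topologicalType) :
  Ktheta_compact R X -> w_compact R X.
Proof.
move=> KX L P tauP fipP; have [x0 _] := fipP set0 (@finite_set0 L).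
apply: contrapT => nclust.
have away (u : X) : exists l, exists2 A, nbhs u A & P l `&` A = set0.
  apply: contrapT => nsep; apply: nclust; exists u => l _ A nA.
  by apply/set0P/negP => /eqP PA; apply: nsep; exists l, A.
have peak D : exists p : X * (X -> R), [/\ continuous p.2, forall t, 0 <= p.2 t,
    forall t, 0 < p.2 t -> forall l, D l -> P l t & finite_set D -> p.2 p.1 = 1].
  (* For infinite [D], [Some D] is an isolated point where any value will do. *)
  case: (pselect (finite_set D)) => [fD|nfD]; last first.
    exists (x0, fun=> 0); split => //= t; first exact: cvg_cst.
    by rewrite ltxx.
  have [x Dx] := fipP D fD; have [g [cg g0 gx gD]] := tau_open_peak tauP fD Dx.
  by exists (x, g).
have [pk pkP] := choice peak.
pose h (z : X * finset_net L) := if z.2 is Some D then (pk D).2 z.1 else 0.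
have ch : continuous h.
  apply: (@continuous_finset_net_glue X L (fun D => (pk D).2)) => [D|u].
    by case: (pkP D).
  have [l [A nA PA]] := away u; exists l, A => // D t Dl At.
  have [_ pk0 pkD _] := pkP D; apply/eqP; rewrite eq_le pk0 andbT leNgt.
  apply/negP => pkt; suff : (P l `&` A) t by rewrite PA.
  by split => //; exact: pkD.
pose S : set (X * finset_net L) := [set ((pk D).1, Some D) | D in finite_set].
have : Ktheta R (snd @` S) None.
  apply/KthetaP => g cg gN; have [D fD gD] := finset_net_None_test cg gN.
  by exists (Some D) => //; exists ((pk D).1, Some D) => //; exists D.
rewrite -KX => -[[x y] KS /= yN].
have c1h : continuous (fun z => 1 - h z).
  by move=> z; apply: cvgB; [exact: cvg_cst | exact: ch].
have [_ [D fD <-]] := Ktheta_test KS c1h ltac:(by rewrite /h yN subr0 ltr01).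
have [_ _ _ /(_ fD) pk1] := pkP D.
by rewrite /h /= pk1 subrr ltxx.
Qed.

End KthetaToW.

Theorem theorem3p1 (R : realType) (X : topologicalType) :
  Ktheta_compact R X <-> w_compact R X.
Proof.
by split; [exact: Ktheta_compact_w_compact | exact: w_compact_Ktheta_compact].
Qed.
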